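(* Let $k$ be a positive integer. Among all real numbers $1\ge a_1\ge a_2\ge\dots\ge a_k\ge0$ with $\sum_{i=1}^k a_i=1$, the value of \[\prod_{i=1}^k\frac{(1+a_i)^{1+a_i}}{a_i^{2a_i}}\] (with the convention $0^0=1$) is maximized when $a_i=\frac1k$ for all $i$. *)

From Stdlib Require Import Reals Lra.
Open Scope R_scope.

Definition rpow (x y : R) : R :=
  if Req_EM_T x 0 then (if Req_EM_T y 0 then 1 else 0) else Rpower x y.

Definition factor (a : R) : R := rpow (1 + a) (1 + a) / rpow a (2 * a).

Fixpoint prod_factor (k : nat) (a : nat -> R) : R :=
  match k with
  | O => 1
  | S k' => prod_factor k' a * factor (a k')
  end.

Fixpoint sum_to (k : nat) (a : nat -> R) : R :=
  match k with
  | O => 0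
  | S k' => sum_to k' a + a k'
  end.

(* The logarithm of a factor is g(x) = (1+x) ln(1+x) - 2x ln x, including at
   x = 0, where both sides vanish (the junk value ln 0 is multiplied by 0).
   Since g'(x) = ln(1+x) - 2 ln x - 1 is decreasing, g is concave on [0, oo),
   so g lies below its tangent at c = 1/k; summing the tangent bound over the
   a_i, the linear terms cancel because sum a_i = k c = 1, and the log of the
   product is at most k g(1/k). *)

From Stdlib Require Import Reals Lra Lia Psatz.
From Coquelicot Require Import Coquelicot.
Open Scope R_scope.

Lemma le_tangent_of_derive_antitone (f f' : R -> R) (lo c x : R) :
  (forall y, lo < y -> derivable_pt_lim f y (f' y)) ->
  (forall y z, lo < y -> y <= z -> f' z <= f' y) ->
  lo < c -> lo < x -> f x <= f c + f' c * (x - c).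
Proof.
  intros Hder Hanti Hc Hx.
  destruct (Rtotal_order x c) as [Hxc | [-> | Hcx]].
  - destruct (MVT_cor2 f f' x c Hxc) as [z [Hmvt Hz]].
    { intros y Hy; apply Hder; lra. }
    assert (f' c <= f' z) by (apply Hanti; lra).
    nra.
  - lra.
  - destruct (MVT_cor2 f f' c x Hcx) as [z [Hmvt Hz]].
    { intros y Hy; apply Hder; lra. }
    assert (f' z <= f' c) by (apply Hanti; lra).
    nra.
Qed.

Definition log_factor (x : R) : R := (1 + x) * ln (1 + x) - 2 * x * ln x.

Definition log_factor_slope (x : R) : R := ln (1 + x) - 2 * ln x - 1.

Lemma log_factor_derive x :
  0 < x -> derivable_pt_lim log_factor x (log_factor_slope x).
Proof.
  intros Hx; apply is_derive_Reals; unfold log_factor, log_factor_slope.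
  auto_derive; [lra | field; lra].
Qed.

Lemma log_factor_slope_antitone x y :
  0 < x -> x <= y -> log_factor_slope y <= log_factor_slope x.
Proof.
  intros Hx Hxy; unfold log_factor_slope.
  assert (Hcross : x * x * (1 + y) <= y * y * (1 + x)).
  { assert (0 <= (y - x) * (x + y + x * y)) by (apply Rmult_le_pos; nra).
    nra. }
  apply ln_le in Hcross; [|nra].
  rewrite !ln_mult in Hcross; nra.
Qed.

Lemma log_factor_le_tangent c x :
  0 < c -> 0 <= x -> log_factor x <= log_factor c + log_factor_slope c * (x - c).
Proof.
  intros Hc [Hx | <-].
  - exact (le_tangent_of_derive_antitone log_factor log_factor_slope 0 c x
             log_factor_derive log_factor_slope_antitone Hc Hx).
  - assert (0 < ln (1 + c)) by (rewrite <- ln_1; apply ln_increasing; lra).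
    unfold log_factor, log_factor_slope.
    rewrite Rplus_0_r, ln_1.
    nra.
Qed.

Lemma factor_eq_exp x : 0 <= x -> factor x = exp (log_factor x).
Proof.
  unfold factor, rpow, log_factor.
  destruct (Req_EM_T (1 + x) 0) as [|_]; [lra|].
  destruct (Req_EM_T x 0) as [-> | Hx0]; intros Hx.
  - destruct (Req_EM_T (2 * 0) 0) as [_|]; [|lra].
    rewrite Rplus_0_r; unfold Rpower; rewrite ln_1.
    replace (1 * 0 - 2 * 0 * ln 0) with (1 * 0) by ring.
    field.
  - unfold Rpower, Rminus, Rdiv.
    rewrite exp_plus, exp_Ropp, Rmult_assoc.
    reflexivity.
Qed.

Lemma prod_factor_eq_exp k a :
  (forall i, (i < k)%nat -> 0 <= a i) ->
  prod_factor k a = exp (sum_to k (fun i => log_factor (a i))).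
Proof.
  induction k as [|k IHk]; intros Ha; cbn [prod_factor sum_to].
  - now rewrite exp_0.
  - rewrite IHk, factor_eq_exp, exp_plus; auto.
Qed.

Lemma sum_to_le k f g :
  (forall i, (i < k)%nat -> f i <= g i) -> sum_to k f <= sum_to k g.
Proof.
  induction k as [|k IHk]; intros Hfg; cbn [sum_to]; [lra|].
  assert (sum_to k f <= sum_to k g) by auto.
  assert (f k <= g k) by auto.
  lra.
Qed.

Lemma sum_to_const k x : sum_to k (fun _ => x) = INR k * x.
Proof.
  induction k as [|k IHk]; cbn [sum_to]; [simpl; ring|].
  rewrite IHk, S_INR; ring.
Qed.

Lemma sum_to_affine k a u v c :
  sum_to k (fun i => u + v * (a i - c)) = INR k * u + v * (sum_to k a - INR k * c).
Proof.
  induction k as [|k IHk]; cbn [sum_to]; [simpl; ring|].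
  rewrite IHk, S_INR; ring.
Qed.

Lemma antitone_le_first k a :
  (forall i, (i + 1 < k)%nat -> a (S i) <= a i) ->
  forall i j, (i <= j < k)%nat -> a j <= a i.
Proof.
  intros Hanti i j Hij.
  replace j with (i + (j - i))%nat by lia.
  assert (Hbound : (i + (j - i) < k)%nat) by lia.
  revert Hbound; generalize (j - i)%nat as d.
  induction d as [|d IHd]; intros Hd; [rewrite Nat.add_0_r; lra|].
  replace (i + S d)%nat with (S (i + d))%nat by lia.
  assert (a (S (i + d)%nat) <= a (i + d)%nat) by (apply Hanti; lia).
  assert (a (i + d)%nat <= a i) by (apply IHd; lia).
  lra.
Qed.

Theorem lemma3p8 (k : nat) (a : nat -> R) :
  (0 < k)%nat ->
  a 0%nat <= 1 ->
  (forall i : nat, (i + 1 < k)%nat -> a (S i) <= a i) ->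
  0 <= a (k - 1)%nat ->
  sum_to k a = 1 ->
  prod_factor k a <= prod_factor k (fun _ => 1 / INR k).
Proof.
  intros Hk _ Hanti Hlast Hsum.
  assert (Hnonneg : forall i, (i < k)%nat -> 0 <= a i).
  { intros i Hi.
    assert (a (k - 1)%nat <= a i) by (apply (antitone_le_first k); auto; lia).
    lra. }
  assert (HkR : 0 < INR k) by (apply lt_0_INR; exact Hk).
  set (c := 1 / INR k).
  assert (Hc : 0 < c) by (apply Rdiv_lt_0_compat; lra).
  assert (Hkc : INR k * c = 1) by (unfold c; field; lra).
  assert (Hlog : sum_to k (fun i => log_factor (a i))
                 <= sum_to k (fun _ => log_factor c)).
  { apply Rle_trans with
      (sum_to k (fun i => log_factor c + log_factor_slope c * (a i - c))).
    - apply sum_to_le; intros i Hi.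
      apply log_factor_le_tangent; auto.
    - rewrite sum_to_affine, !sum_to_const, Hsum, Hkc; lra. }
  rewrite (prod_factor_eq_exp k a Hnonneg).
  rewrite (prod_factor_eq_exp k (fun _ => c)) by (intros; lra).
  destruct Hlog as [Hlt | ->]; [left; now apply exp_increasing | right; reflexivity].
Qed.
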